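(* Let $f_1,\dots,f_p$ be analytic on an open disk centered at $0$, $A_1,\dots,A_p\in\mathbb{C}^{n\times n}$, $k\ge1$, and $W\in\mathbb{C}^{n\times(k+1)}$. Let $Z=\sum_{m=1}^pA_mW(G_{k+1}\circ F_m)$, where $G_{k+1}$ and $F_m$ are as in the context. Let $1\le q\le k+1$ and let $U,V\in\mathbb{R}^{(k+1)\times q}$, with columns $u_j,v_j$, be factors of a best rank-$q$ approximation $UV^T$ of $G_{k+1}$. Then $$\tilde Z=\sum_{m=1}^pA_m\sum_{j=1}^qW\operatorname{diag}(u_j)F_m\operatorname{diag}(v_j)$$ satisfies $$\|Z-\tilde Z\|_F\le\Big(\sum_{m=1}^p\|A_mW\|_2\,\|F_m\|_F\Big)\sum_{j=q+1}^{k+1}\sigma_j(G_{k+1}),$$ where $\sigma_j(G_{k+1})$ are the singular values of $G_{k+1}$ in decreasing order.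
   Context: $\mathbf{C}=[c_{i,j}]_{i,j\ge1}$ is the infinite matrix determined by $c_{i,1}=1/(i+1)$ ($i\ge1$) and $c_{i-1,j}=\frac{j}{i}c_{i,j-1}$ ($i,j>1$). $G_{k+1}\in\mathbb{R}^{(k+1)\times(k+1)}$ has entries $g_{j,1}=g_{1,j}=1/j$ ($j=1,\dots,k+1$) and $g_{i,j}=c_{i-1,j}/j$ for $i,j\ge2$. $F_m\in\mathbb{C}^{(k+1)\times(k+1)}$ is the Hankel matrix with $(i,j)$ entry $f_m^{(i+j-1)}(0)$. $\circ$ is the Hadamard product; $\operatorname{diag}(u)$ is the diagonal matrix with diagonal $u$. *)

From mathcomp Require Import all_order.
From mathcomp Require Import all_boot all_algebra.
From mathcomp Require Import all_classical all_reals all_analysis.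
From mathcomp.real_closed Require Import complex.

Set Implicit Arguments.
Unset Strict Implicit.
Unset Printing Implicit Defensive.

Import Order.TTheory GRing.Theory Num.Theory.
Import numFieldNormedType.Exports.
Local Open Scope ring_scope.

Section Defs.
Variable R : realType.

Definition Cx : numFieldType := R[i].

Definition toC (x : R) : Cx := Complex x 0.

Definition cabs2 (z : Cx) : R := (@complex.Re R z) ^+ 2 + (@complex.Im R z) ^+ 2.

Definition frobC m n (M : 'M[Cx]_(m, n)) : R :=
  Num.sqrt (\sum_(i < m) \sum_(j < n) cabs2 (M i j)).
Definition frobR m n (M : 'M[R]_(m, n)) : R :=
  Num.sqrt (\sum_(i < m) \sum_(j < n) M i j ^+ 2).

Definition opnorm2 m n (M : 'M[Cx]_(m, n)) : R :=
  sup [set t : R | exists x : 'cV[Cx]_n, x != 0 /\ t = frobC (M *m x) / frobC x].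

Definition disk0 (r : R) : set Cx := [set z : Cx | cabs2 z < r ^+ 2].

(* f is analytic (= holomorphic, complex differentiable) on the open disk *)
Definition analytic_on_disk (r : R) (f : Cx -> Cx) : Prop :=
  forall z, disk0 r z -> derivable f z 1.

(* the infinite matrix C = [c_{i,j}], 1-indexed:
   c_{i,1} = 1/(i+1),  c_{i,j} = j/(i+1) * c_{i+1,j-1}  (j > 1),
   which is the recursion c_{i-1,j} = (j/i) c_{i,j-1} (i,j > 1). *)
Fixpoint cc (i j : nat) : R :=
  match j with
  | 0 => 0
  | 1 => (i.+1)%:R^-1
  | j'.+1 => j%:R / (i.+1)%:R * cc i.+1 j'
  end.

(* G_{k+1}, 0-indexed: entry (a,b) is g_{a+1,b+1} *)
Definition Gmx (k : nat) : 'M[R]_(k.+1) :=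
  \matrix_(a < k.+1, b < k.+1)
    if (a == 0%N :> nat) then (b.+1)%:R^-1
    else if (b == 0%N :> nat) then (a.+1)%:R^-1
    else cc a b.+1 / (b.+1)%:R.

(* Hankel matrix F, 0-indexed: entry (a,b) is f^{(a+b+1)}(0) *)
Definition Fmx (k : nat) (f : Cx -> Cx) : 'M[Cx]_(k.+1) :=
  \matrix_(a < k.+1, b < k.+1) (derive1n (a + b).+1 f 0).

Definition hadamard m n (M N : 'M[Cx]_(m, n)) : 'M[Cx]_(m, n) :=
  \matrix_(i < m, j < n) (M i j * N i j).

(* s lists the singular values of the square real matrix G in decreasing
   order: they are nonnegative, nonincreasing, and their squares are the
   eigenvalues (with algebraic multiplicity) of G^T G. *)
Definition singular_values n (G : 'M[R]_n) (s : 'I_n -> R) : Prop :=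
  (forall i, 0 <= s i) /\
  (forall i j : 'I_n, (i <= j)%N -> s j <= s i) /\
  char_poly (G^T *m G) = \prod_(i < n) ('X - (s i ^+ 2)%:P).

Definition best_rank_approx m n (q : nat) (G X : 'M[R]_(m, n)) : Prop :=
  (\rank X <= q)%N /\
  forall Y : 'M[R]_(m, n), (\rank Y <= q)%N -> frobR (G - X) <= frobR (G - Y).

End Defs.

From mathcomp Require Import all_order.
From mathcomp Require Import all_boot all_algebra.
From mathcomp Require Import all_classical all_reals all_analysis.
From mathcomp.real_closed Require Import complex.
From mathcomp Require Import perm ring lra.

(* Write E := G - U V^T. Since \sum_j diag(u_j) F diag(v_j) = (U V^T) o F, the
   error is Z - Z~ = \sum_m (A_m W) (E o F_m), and each term has Frobenius norm
   at most ||A_m W||_2 max_ab |E_ab| ||F_m||_F. Every entry of E is bounded by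
   ||E||_F, which by optimality of U V^T is at most the error of G P, where P
   projects orthogonally onto q eigenvectors of G^T G for the eigenvalues
   s_1^2, ..., s_q^2. That error is (\sum_(j > q) s_j^2)^(1/2) <= \sum_(j > q) s_j. *)

Set Implicit Arguments.
Unset Strict Implicit.
Unset Printing Implicit Defensive.

Import Order.TTheory GRing.Theory Num.Theory.
Import numFieldNormedType.Exports.
Local Open Scope ring_scope.

Lemma ler_term_sum2 (R : numDomainType) (I J : finType) (F : I -> J -> R) :
  (forall i j, 0 <= F i j) -> forall i j, F i j <= \sum_i \sum_j F i j.
Proof.
move=> F_ge0 i j; rewrite (bigD1 i) //= (bigD1 j) //= -addrA lerDl.
by rewrite addr_ge0 ?sumr_ge0 // => k _; rewrite sumr_ge0.
Qed.

Lemma sum_sqr_le_sqr_sum (R : realDomainType) (I : finType) (P : pred I) (F : I -> R) :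
  (forall i, P i -> 0 <= F i) -> \sum_(i | P i) F i ^+ 2 <= (\sum_(i | P i) F i) ^+ 2.
Proof.
move=> F_ge0; suff [] : \sum_(i | P i) F i ^+ 2 <= (\sum_(i | P i) F i) ^+ 2
    /\ 0 <= \sum_(i | P i) F i by [].
apply: (big_rec2 (fun a b => a <= b ^+ 2 /\ 0 <= b)); first by rewrite expr0n.
move=> i a b /F_ge0 Fi_ge0 [ab b_ge0]; split; last exact: addr_ge0.
have : 0 <= F i * b by rewrite mulr_ge0.
nra.
Qed.

Lemma sqr_sum_mul_le (R : realFieldType) (I : finType) (a b : I -> R) :
  (\sum_i a i * b i) ^+ 2 <= (\sum_i a i ^+ 2) * (\sum_i b i ^+ 2).
Proof.
set A := \sum_i a i ^+ 2; set B := \sum_i b i ^+ 2; set C := \sum_i a i * b i.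
have B_ge0 : 0 <= B by rewrite sumr_ge0 // => i _; rewrite sqr_ge0.
have [B0|B_neq0] := eqVneq B 0.
  have b0 i : b i = 0.
    apply/eqP; rewrite -sqrf_eq0; apply/eqP/(psumr_eq0P _ B0) => // j _.
    by rewrite sqr_ge0.
  by rewrite /C big1 ?B0 ?expr0n ?mulr0 // => i _; rewrite b0 mulr0.
have sum_sqr_eq : \sum_i (B * a i - C * b i) ^+ 2 = B * (A * B - C ^+ 2).
  rewrite (eq_bigr (fun i => B ^+ 2 * a i ^+ 2 - (2 * B * C) * (a i * b i)
     + C ^+ 2 * b i ^+ 2)); last by move=> i _; ring.
  rewrite big_split sumrB /= -!mulr_sumr -/A -/B -/C; ring.
have : 0 <= B * (A * B - C ^+ 2).
  by rewrite -sum_sqr_eq sumr_ge0 // => i _; rewrite sqr_ge0.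
by rewrite pmulr_rge0 ?lt_def ?B_neq0 // subr_ge0; lra.
Qed.

Lemma minkowski_sum (R : rcfType) (I : finType) (a b : I -> R) :
  Num.sqrt (\sum_i (a i + b i) ^+ 2) <=
  Num.sqrt (\sum_i a i ^+ 2) + Num.sqrt (\sum_i b i ^+ 2).
Proof.
set A := \sum_i a i ^+ 2; set B := \sum_i b i ^+ 2; set C := \sum_i a i * b i.
have A_ge0 : 0 <= A by rewrite sumr_ge0 // => i _; rewrite sqr_ge0.
have B_ge0 : 0 <= B by rewrite sumr_ge0 // => i _; rewrite sqr_ge0.
have sqrt_ge0 : 0 <= Num.sqrt A + Num.sqrt B by rewrite addr_ge0 ?sqrtr_ge0.
rewrite -(ger0_norm sqrt_ge0) -sqrtr_sqr ler_sqrt ?sqr_ge0 //.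
have -> : \sum_i (a i + b i) ^+ 2 = A + 2 * C + B.
  rewrite (eq_bigr (fun i => a i ^+ 2 + 2 * (a i * b i) + b i ^+ 2)).
    by rewrite !big_split /= -mulr_sumr.
  by move=> i _; ring.
have CS : C <= Num.sqrt A * Num.sqrt B.
  rewrite -sqrtrM // (le_trans (ler_norm C)) // -sqrtr_sqr ler_sqrt ?mulr_ge0 //.
  exact: sqr_sum_mul_le.
have := sqr_sqrtr A_ge0; have := sqr_sqrtr B_ge0.
have := sqrtr_ge0 A; have := sqrtr_ge0 B.
nra.
Qed.

Section ComplexFrobenius.
Variable R : realType.
Local Notation C := (Cx R).

Lemma cabs2_ge0 (z : C) : 0 <= cabs2 z.
Proof. by rewrite addr_ge0 ?sqr_ge0. Qed.

Lemma cabs2_eq0 (z : C) : (cabs2 z == 0) = (z == 0).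
Proof.
case: z => a b; rewrite /cabs2 paddr_eq0 ?sqr_ge0 //= !sqrf_eq0.
by apply/andP/eqP => [[/eqP -> /eqP ->] | [-> ->]].
Qed.

Lemma cabs2M (y z : C) : cabs2 (y * z) = cabs2 y * cabs2 z.
Proof. by case: y => a b; case: z => c d; rewrite /cabs2 /=; ring. Qed.

Lemma cabs2_toCM (e : R) (z : C) : cabs2 (toC e * z) = e ^+ 2 * cabs2 z.
Proof. by case: z => c d; rewrite /cabs2 /toC /=; ring. Qed.

Lemma frobC_ge0 m n (X : 'M[C]_(m, n)) : 0 <= frobC X.
Proof. exact: sqrtr_ge0. Qed.

Lemma sqr_frobC m n (X : 'M[C]_(m, n)) :
  frobC X ^+ 2 = \sum_i \sum_j cabs2 (X i j).
Proof.
rewrite sqr_sqrtr // sumr_ge0 // => i _.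
by rewrite sumr_ge0 // => j _; apply: cabs2_ge0.
Qed.

Lemma cabs2_le_sqr_frobC m n (X : 'M[C]_(m, n)) i j : cabs2 (X i j) <= frobC X ^+ 2.
Proof. by rewrite sqr_frobC; apply: ler_term_sum2 => *; apply: cabs2_ge0. Qed.

Lemma frobC_eq0 m n (X : 'M[C]_(m, n)) : (frobC X == 0) = (X == 0).
Proof.
apply/idP/eqP => [/eqP X0 | ->]; last first.
  rewrite /frobC big1 ?sqrtr0 // => i _; rewrite big1 // => j _.
  by rewrite mxE /cabs2 /= expr0n addr0.
apply/matrixP => i j; apply/eqP; rewrite mxE -cabs2_eq0 eq_le cabs2_ge0 andbT.
by have := cabs2_le_sqr_frobC X i j; rewrite X0 expr0n.
Qed.

Lemma frobC0 m n : frobC (0 : 'M[C]_(m, n)) = 0.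
Proof. by apply/eqP; rewrite frobC_eq0. Qed.

Lemma frobC_gt0 m n (X : 'M[C]_(m, n)) : (0 < frobC X) = (X != 0).
Proof. by rewrite lt_def frobC_ge0 frobC_eq0 andbT. Qed.

Lemma frobCD m n (X Y : 'M[C]_(m, n)) : frobC (X + Y) <= frobC X + frobC Y.
Proof.
pose coord (M : 'M[C]_(m, n)) (t : 'I_m * 'I_n * bool) :=
  let: (i, j, b) := t in if b then complex.Im (M i j) else complex.Re (M i j).
have frobCE M : frobC M = Num.sqrt (\sum_t coord M t ^+ 2).
  transitivity (Num.sqrt (\sum_p \sum_(b : bool) coord M (p, b) ^+ 2)).
    rewrite /frobC pair_big /=; congr Num.sqrt; apply: eq_bigr => -[i j] _.
    by rewrite big_bool /= addrC.
  by rewrite pair_big; congr Num.sqrt; apply: eq_bigr => -[[i j] b].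
have coordD t : coord (X + Y) t = coord X t + coord Y t.
  by case: t => [[i j] []]; rewrite /= mxE; case: (X i j); case: (Y i j).
by rewrite !frobCE; under eq_bigr do rewrite coordD; apply: minkowski_sum.
Qed.

Lemma frobC_sum (I : finType) m n (X : I -> 'M[C]_(m, n)) :
  frobC (\sum_i X i) <= \sum_i frobC (X i).
Proof.
elim/big_rec2: _ => [|i A y _ le_Ay]; first by rewrite frobC0.
exact: le_trans (frobCD _ _) (lerD (lexx _) le_Ay).
Qed.

Lemma frobCZ m n (c : C) (X : 'M[C]_(m, n)) :
  frobC (c *: X) = Num.sqrt (cabs2 c) * frobC X.
Proof.
rewrite /frobC -sqrtrM ?cabs2_ge0 // mulr_sumr; congr Num.sqrt.
by apply: eq_bigr => i _; rewrite mulr_sumr; apply: eq_bigr => j _; rewrite mxE cabs2M.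
Qed.

Lemma sqr_frobC_col m n (X : 'M[C]_(m, n)) :
  frobC X ^+ 2 = \sum_l frobC (col l X) ^+ 2.
Proof.
rewrite sqr_frobC exchange_big; apply: eq_bigr => l _; rewrite sqr_frobC.
by apply: eq_bigr => i _; rewrite big_ord1 mxE.
Qed.

Lemma frobC_mulmx_cV_le_sum_col m p (B : 'M[C]_(m, p)) (x : 'cV[C]_p) :
  frobC (B *m x) <= (\sum_j frobC (col j B)) * frobC x.
Proof.
have -> : B *m x = \sum_j x j 0 *: col j B.
  by apply/colP => i; rewrite !mxE summxE; apply: eq_bigr => j _; rewrite !mxE mulrC.
apply: le_trans (frobC_sum _) _; rewrite mulr_suml; apply: ler_sum => j _.
rewrite frobCZ mulrC ler_wpM2l ?frobC_ge0 // -(ger0_norm (frobC_ge0 x)) -sqrtr_sqr.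
by rewrite ler_sqrt ?sqr_ge0 ?cabs2_le_sqr_frobC.
Qed.

Lemma has_ubound_opnorm2 m p (B : 'M[C]_(m, p)) :
  has_ubound [set t : R | exists x : 'cV[C]_p, x != 0 /\ t = frobC (B *m x) / frobC x].
Proof.
exists (\sum_j frobC (col j B)) => _ [x [x_neq0 ->]].
by rewrite ler_pdivrMr ?frobC_gt0 ?frobC_mulmx_cV_le_sum_col.
Qed.

Lemma frobC_mulmx_cV_le m p (B : 'M[C]_(m, p)) (x : 'cV[C]_p) :
  frobC (B *m x) <= opnorm2 B * frobC x.
Proof.
have [->|x_neq0] := eqVneq x 0; first by rewrite mulmx0 !frobC0 mulr0.
rewrite -ler_pdivrMr ?frobC_gt0 //.
by apply: (ub_le_sup (has_ubound_opnorm2 B)); exists x.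
Qed.

Lemma opnorm2_ge0 m p (B : 'M[C]_(m, p)) : 0 <= opnorm2 B.
Proof.
case: p B => [|p] B.
  rewrite /opnorm2 (_ : [set t : R | _] = set0)%classic ?sup0 //.
  by apply/seteqP; split=> // t [x [/negP[]]]; apply/eqP/matrixP => -[].
pose x : 'cV[C]_p.+1 := const_mx 1.
have x_neq0 : x != 0.
  by apply/eqP => /matrixP /(_ ord0 0); rewrite !mxE => /eqP; rewrite oner_eq0.
apply: le_trans (ub_le_sup (has_ubound_opnorm2 B) _); last by exists x.
by rewrite divr_ge0 ?frobC_ge0.
Qed.

Lemma frobC_mulmx_le m p l (B : 'M[C]_(m, p)) (H : 'M[C]_(p, l)) :
  frobC (B *m H) <= opnorm2 B * frobC H.
Proof.
rewrite -ler_sqr ?nnegrE ?mulr_ge0 ?opnorm2_ge0 ?frobC_ge0 //.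
rewrite exprMn !sqr_frobC_col mulr_sumr; apply: ler_sum => j _.
rewrite colE -mulmxA -colE -exprMn lerXn2r ?nnegrE ?mulr_ge0 ?opnorm2_ge0 ?frobC_ge0 //.
exact: frobC_mulmx_cV_le.
Qed.

Lemma frobC_hadamard_le m n (E : 'M[R]_(m, n)) (F : 'M[C]_(m, n)) (c : R) :
  0 <= c -> (forall i j, `|E i j| <= c) ->
  frobC (hadamard (map_mx (@toC R) E) F) <= c * frobC F.
Proof.
move=> c_ge0 le_Ec; rewrite -(ger0_norm c_ge0) -sqrtr_sqr -sqrtrM ?sqr_ge0 //.
rewrite ler_sqrt ?mulr_ge0 ?sqr_ge0 ?sumr_ge0 // => [|i _]; last first.
  by rewrite sumr_ge0 // => j _; apply: cabs2_ge0.
rewrite mulr_sumr; apply: ler_sum => i _; rewrite mulr_sumr; apply: ler_sum => j _.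
rewrite !mxE cabs2_toCM ler_wpM2r ?cabs2_ge0 // -real_normK ?num_real //.
by rewrite ler_sqr ?nnegrE ?normr_ge0 ?le_Ec.
Qed.

End ComplexFrobenius.

Lemma symmetric_diagonalizable (R : rcfType) n (M : 'M[R]_n) : M^T = M ->
  exists (Q : 'M[R]_n) (d : 'rV[R]_n), Q \in unitmx /\ Q *m M = diag_mx d *m Q.
Proof.
move=> M_sym; pose MC := map_mx (real_complex R) M.
have MC_real : MC \is a mxOver Num.real.
  by apply/mxOverP => i j; rewrite mxE complex_real.
have MC_herm : MC \is hermsymmx.
  apply: realsym_hermsym => //; apply/is_hermitianmxP; rewrite expr0 scale1r.
  by rewrite map_mx_id //; apply/matrixP => i j; rewrite !mxE -[in RHS]M_sym mxE.
have /orthomx_spectralP MC_spectral := hermitian_normalmx MC_herm.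
set P := spectralmx MC in MC_spectral; set D := spectral_diag MC in MC_spectral.
have P_unit : P \in unitmx by apply: spectral_unit.
have D_real : diag_mx D \is a mxOver Num.real.
  apply/mxOverP => i j; rewrite mxE; case: (i == j); rewrite ?mulr0n ?real0 //.
  by rewrite mulr1n (mxOverP (hermitian_spectral_diag_real MC_herm)).
have MC_sim : similar_in unitmx MC (diag_mx D).
  exists P => //; apply/similarP => //.
  by rewrite {1}MC_spectral !mulmxA mulmxV // mul1mx.
have [QC /andP[QC_real QC_unit] /(similarP QC_unit) QC_sim] :=
  real_similar MC_sim MC_real D_real.
have ReK m m' (X : 'M[R[i]]_(m, m')) : X \is a mxOver Num.real ->
    map_mx (real_complex R) (map_mx (@complex.Re R) X) = X.
  by move=> /mxOverP X_real; apply/matrixP => i j; rewrite !mxE RRe_real.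
set Q := map_mx (@complex.Re R) QC; set d := map_mx (@complex.Re R) D.
have QE : map_mx (real_complex R) Q = QC by apply: ReK.
have dE : map_mx (real_complex R) (diag_mx d) = diag_mx D.
  rewrite -[RHS]ReK //; congr map_mx.
  by apply/matrixP => i j; rewrite !mxE; case: (i == j).
exists Q, d; split.
  move: QC_unit; rewrite -QE !unitmxE det_map_mx !unitfE.
  by apply: contra => /eqP ->; rewrite rmorph0.
apply: (@map_mx_inj _ _ (real_complex R)).
by rewrite !map_mxM QE dE.
Qed.

Lemma char_poly_similar (F : fieldType) n (Q A B : 'M[F]_n) :
  Q \in unitmx -> Q *m A = B *m Q -> char_poly A = char_poly B.
Proof.
move=> Q_unit QA; pose Qp := map_mx polyC Q.
have QpA : Qp *m char_poly_mx A = char_poly_mx B *m Qp.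
  rewrite /char_poly_mx mulmxBr mulmxBl -!map_mxM QA.
  by rewrite mul_mx_scalar mul_scalar_mx.
move/(congr1 determinant): QpA; rewrite !det_mulmx mulrC => /mulIf; apply.
by rewrite det_map_mx polyC_eq0 -unitfE -unitmxE.
Qed.

Lemma char_poly_diag (R : comNzRingType) n (d : 'rV[R]_n) :
  char_poly (diag_mx d) = \prod_i ('X - (d 0 i)%:P).
Proof.
rewrite char_poly_trig ?diag_mx_is_trig //.
by apply: eq_bigr => i _; rewrite mxE eqxx mulr1n.
Qed.

Lemma eq_prod_XsubC_perm (F : fieldType) n (f g : 'I_n -> F) :
  \prod_i ('X - (f i)%:P) = \prod_i ('X - (g i)%:P) ->
  exists s : 'S_n, forall i, f i = g (s i).
Proof.
move=> fg; have : perm_eq [seq f i | i <- ord_tuple n] [tuple g i | i < n].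
  by apply: prod_XsubC_eq; rewrite /= !big_map.
case/tuple_permP => s fgs; exists s => i.
have := congr1 (fun t => nth (f i) t i) fgs.
rewrite /= (nth_map i) ?size_enum_ord // (nth_map i) ?size_enum_ord //.
by rewrite nth_ord_enum tnth_mktuple.
Qed.

Lemma sum_sqr_mx_tr (R : comPzRingType) m n (X : 'M[R]_(m, n)) :
  \sum_i \sum_j X i j ^+ 2 = \tr (X^T *m X).
Proof.
rewrite /mxtrace exchange_big; apply: eq_bigr => j _; rewrite mxE.
by apply: eq_bigr => i _; rewrite mxE expr2.
Qed.

Lemma sum_sqr_sub_mulmx_proj (R : comPzRingType) m n (G : 'M[R]_(m, n)) P :
  P^T = P -> P *m P = P ->
  \sum_i \sum_j (G - G *m P) i j ^+ 2 = \tr (G^T *m G) - \tr (G^T *m G *m P).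
Proof.
move=> P_sym P_idem; set P' := 1%:M - P.
have P'_sym : P'^T = P' by rewrite /P' linearB /= trmx1 P_sym.
have P'_idem : P' *m P' = P'.
  by rewrite /P' mulmxBl mul1mx mulmxBr mulmx1 P_idem subrr subr0.
rewrite -{1}[G]mulmx1 -mulmxBr -/P' sum_sqr_mx_tr.
have -> : (G *m P')^T *m (G *m P') = P' *m (G^T *m G *m P').
  by rewrite trmx_mul P'_sym !mulmxA.
by rewrite mxtrace_mulC -!mulmxA P'_idem !mulmxA /P' mulmxBr mulmx1 raddfB.
Qed.

Section RowspaceProjection.
Variables (R : realFieldType) (q n : nat) (B : 'M[R]_(q, n)).

Definition rowspace_proj : 'M[R]_n := B^T *m invmx (B *m B^T) *m B.

Lemma trmx_rowspace_proj : rowspace_proj^T = rowspace_proj.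
Proof. by rewrite !trmx_mul trmx_inv trmx_mul !trmxK !mulmxA. Qed.

Lemma mxrank_rowspace_proj : (\rank rowspace_proj <= q)%N.
Proof. exact: leq_trans (mxrankM_maxr _ _) (rank_leq_row B). Qed.

Hypothesis B_free : row_free B.

Lemma gram_unitmx : B *m B^T \in unitmx.
Proof.
rewrite -row_free_unit; apply/inj_row_free => v vBB0; apply: (row_free_inj B_free).
rewrite mul0mx; set w := v *m B.
have /eqP : (w *m w^T) 0 0 = 0.
  by rewrite trmx_mul !mulmxA -(mulmxA v) vBB0 mul0mx mxE.
rewrite mxE psumr_eq0 => [/allP w0|j _]; last by rewrite [w^T _ _]mxE -expr2 sqr_ge0.
apply/rowP => i; rewrite [RHS]mxE; apply/eqP; rewrite -sqrf_eq0.
by have := w0 i (mem_index_enum _); rewrite [w^T _ _]mxE -expr2.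
Qed.

Lemma rowspace_proj_idem : rowspace_proj *m rowspace_proj = rowspace_proj.
Proof.
rewrite /rowspace_proj !mulmxA -(mulmxA _ B) -(mulmxA _ (B *m B^T)).
by rewrite mulmxV ?gram_unitmx // mulmx1.
Qed.

Lemma mxtrace_mul_rowspace_proj M (d : 'rV[R]_q) :
  B *m M = diag_mx d *m B -> \tr (M *m rowspace_proj) = \sum_j d 0 j.
Proof.
move=> BM; rewrite /rowspace_proj !mulmxA mxtrace_mulC !mulmxA BM.
by rewrite -(mulmxA _ B) -mulmxA mulmxV ?gram_unitmx // mulmx1 mxtrace_diag.
Qed.

End RowspaceProjection.

Lemma rowsub_diag_mulmx (R : pzRingType) m m' n (h : 'I_m' -> 'I_m)
    (d : 'rV[R]_m) (Q : 'M[R]_(m, n)) :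
  rowsub h (diag_mx d *m Q) = diag_mx (\row_i d 0 (h i)) *m rowsub h Q.
Proof. by apply/matrixP => i j; rewrite !mul_diag_mx !mxE. Qed.

Lemma gram_diagonalization (R : realType) n (G : 'M[R]_n) s :
  singular_values G s ->
  exists2 Q : 'M[R]_n, Q \in unitmx & Q *m (G^T *m G) = diag_mx (\row_i s i ^+ 2) *m Q.
Proof.
move=> [_ [_ charGG]].
have GG_sym : (G^T *m G)^T = G^T *m G by rewrite trmx_mul trmxK.
have [Q [d [Q_unit QM]]] := symmetric_diagonalizable GG_sym.
have [sg s_d] : exists sg : 'S_n, forall i, s i ^+ 2 = d 0 (sg i).
  apply: eq_prod_XsubC_perm.
  by rewrite -charGG -char_poly_diag (char_poly_similar Q_unit QM).
exists (rowsub sg Q).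
  by rewrite -row_permEsub row_permE unitmx_mul unitmx_perm.
rewrite mul_rowsub_mx QM rowsub_diag_mulmx; congr (diag_mx _ *m _).
by apply/rowP => i; rewrite !mxE s_d.
Qed.

Lemma truncated_svd_sum_sqr (R : realType) n q (G : 'M[R]_n) s :
  (q <= n)%N -> singular_values G s ->
  exists2 Y : 'M[R]_n, (\rank Y <= q)%N &
    \sum_i \sum_j (G - Y) i j ^+ 2 = \sum_(j < n | (q <= j)%N) s j ^+ 2.
Proof.
move=> le_qn /gram_diagonalization [Q Q_unit QM]; set M := G^T *m G in QM.
set B := rowsub (widen_ord le_qn) Q.
have B_free : row_free B.
  have -> : B = pid_mx q *m Q by rewrite (pid_mxErow _ le_qn) mul_rowsub_mx mul1mx.
  by rewrite /row_free mxrankMfree ?row_free_unit // rank_pid_mx.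
have BM : B *m M = diag_mx (\row_j s (widen_ord le_qn j) ^+ 2) *m B.
  rewrite mul_rowsub_mx QM rowsub_diag_mulmx; congr (diag_mx _ *m _).
  by apply/rowP => j; rewrite !mxE.
exists (G *m rowspace_proj B).
  exact: leq_trans (mxrankM_maxr _ _) (mxrank_rowspace_proj B).
rewrite sum_sqr_sub_mulmx_proj ?trmx_rowspace_proj ?rowspace_proj_idem // -/M.
have -> : \tr M = \tr (diag_mx (\row_i s i ^+ 2)).
  by rewrite -[M](mulKmx Q_unit) QM mxtrace_mulC mulmxK.
have sum_row m (f : 'I_m -> R) : \sum_i (\row_i f i) 0 i = \sum_i f i.
  by apply: eq_bigr => i _; rewrite mxE.
rewrite (mxtrace_mul_rowspace_proj B_free BM) mxtrace_diag !sum_row.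
rewrite (bigID (fun i : 'I_n => (i < q)%N)) /= big_ord_narrow addrAC subrr add0r.
by apply: eq_bigl => i; rewrite -leqNgt.
Qed.

Section BestRankApproximation.
Variables (R : realType) (n q : nat) (G X : 'M[R]_n) (s : 'I_n -> R).
Hypotheses (le_qn : (q <= n)%N) (X_best : best_rank_approx q G X)
  (G_sv : singular_values G s).

Lemma best_rank_approx_sum_sqr_le :
  \sum_i \sum_j (G - X) i j ^+ 2 <= \sum_(j < n | (q <= j)%N) s j ^+ 2.
Proof.
have [Y rank_Y <-] := truncated_svd_sum_sqr le_qn G_sv.
have sum_ge0 (M : 'M[R]_n) : 0 <= \sum_i \sum_j M i j ^+ 2.
  by rewrite sumr_ge0 // => i _; rewrite sumr_ge0 // => j _; rewrite sqr_ge0.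
by rewrite -ler_sqrt ?sum_ge0 //; apply: X_best.2.
Qed.

Lemma best_rank_approx_entry_le i j :
  `|(G - X) i j| <= \sum_(k < n | (q <= k)%N) s k.
Proof.
have s_ge0 k : 0 <= s k by case: G_sv.
rewrite -ler_sqr ?nnegrE ?normr_ge0 ?sumr_ge0 // real_normK ?num_real //.
apply: le_trans (ler_term_sum2 (fun i j => sqr_ge0 ((G - X) i j)) i j) _.
apply: le_trans best_rank_approx_sum_sqr_le _.
exact: sum_sqr_le_sqr_sum.
Qed.

End BestRankApproximation.

Section HadamardRealComplex.
Variable R : realType.
Local Notation toCmx := (map_mx (@toC R)).

Lemma toCE (x : R) : toC x = real_complex R x. Proof. by []. Qed.

Lemma hadamard_toCB m n (M N : 'M[R]_(m, n)) (F : 'M[Cx R]_(m, n)) :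
  hadamard (toCmx (M - N)) F = hadamard (toCmx M) F - hadamard (toCmx N) F.
Proof. by apply/matrixP => i j; rewrite !mxE !toCE rmorphB mulrBl. Qed.

Lemma sum_diag_mulmx_diag m n q (U : 'M[R]_(m, q)) (V : 'M[R]_(n, q))
    (F : 'M[Cx R]_(m, n)) :
  \sum_(j < q) (diag_mx (toCmx (col j U)^T) *m F *m diag_mx (toCmx (col j V)^T))
  = hadamard (toCmx (U *m V^T)) F.
Proof.
apply/matrixP => a b; rewrite summxE !mxE toCE rmorph_sum mulr_suml.
by apply: eq_bigr => j _; rewrite mul_mx_diag mul_diag_mx !mxE !toCE rmorphM /=; ring.
Qed.

End HadamardRealComplex.

Theorem theorem6 (R : realType) (n p k q : nat) (r : R)
  (f : 'I_p -> Cx R -> Cx R) (A : 'I_p -> 'M[Cx R]_n) (W : 'M[Cx R]_(n, k.+1))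
  (U V : 'M[R]_(k.+1, q)) (s : 'I_(k.+1) -> R) :
  0 < r ->
  (forall m, analytic_on_disk r (f m)) ->
  (1 <= k)%N ->
  (1 <= q)%N -> (q <= k.+1)%N ->
  best_rank_approx q (Gmx R k) (U *m V^T) ->
  singular_values (Gmx R k) s ->
  let Z := \sum_(m < p) A m *m W *m hadamard (map_mx (@toC R) (Gmx R k)) (Fmx k (f m)) in
  let Zt := \sum_(m < p) A m *m
      \sum_(j < q) (W *m diag_mx (map_mx (@toC R) (col j U)^T) *m Fmx k (f m)
                      *m diag_mx (map_mx (@toC R) (col j V)^T)) in
  frobC (Z - Zt) <=
    (\sum_(m < p) opnorm2 (A m *m W) * frobC (Fmx k (f m)))
    * \sum_(j < k.+1 | (q <= j)%N) s j.
Proof.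
move=> _ _ _ _ le_qk best G_sv; cbv zeta.
set E := Gmx R k - U *m V^T.
have Z_err m : A m *m W *m hadamard (map_mx (@toC R) (Gmx R k)) (Fmx k (f m))
    - A m *m \sum_(j < q) (W *m diag_mx (map_mx (@toC R) (col j U)^T) *m Fmx k (f m)
                             *m diag_mx (map_mx (@toC R) (col j V)^T))
    = A m *m W *m hadamard (map_mx (@toC R) E) (Fmx k (f m)).
  rewrite (_ : \sum_j _ = W *m hadamard (map_mx (@toC R) (U *m V^T)) (Fmx k (f m))).
    by rewrite mulmxA -mulmxBr -hadamard_toCB.
  by rewrite -sum_diag_mulmx_diag mulmx_sumr; apply: eq_bigr => j _; rewrite !mulmxA.
rewrite -sumrB (eq_bigr _ (fun m _ => Z_err m)) mulr_suml.
apply: le_trans (frobC_sum _) (ler_sum _ _) => m _.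
apply: le_trans (frobC_mulmx_le _ _) _; rewrite -mulrA ler_wpM2l ?opnorm2_ge0 // mulrC.
apply: frobC_hadamard_le => [|i j]; last exact: best_rank_approx_entry_le.
by rewrite sumr_ge0 // => j _; case: G_sv.
Qed.
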